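(* Let $N=[n]$ and $v:2^N\to\mathbb{R}_+$ be a monotone valuation with $v(\emptyset)=0$. The decision map that, for each $p\in\mathbb{R}^n_+$, chooses the lexicographically first set in $D(v;p)$ is up-consistent; and the decision map that chooses the lexicographically first set among the maximal (with respect to inclusion) sets of $D(v;p)$ is maximal and up-consistent.
   Context: For $p\in\mathbb{R}^n_+$, $p(S)=\sum_{j\in S}p_j$ and $D(v;p)=\arg\max_{S\subseteq N}(v(S)-p(S))$. A decision map is $X:\mathbb{R}^n_+\to2^N$ with $X(p)\in D(v;p)$ for all $p$; it is maximal if for every $p$ there is no $S'\in D(v;p)$ with $X(p)\subsetneq S'$. ''Lexicographically first'' refers to a fixed lexicographic total order on subsets of $N$. A decision map $X$ is up-consistent if for every price vector $p$ with $X(p)=S$, every $i$ and every $p_i'>p_i$, either $X(p_i',p_{-i})=S$ or $i\notin X(p_i',p_{-i})$. *)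

From mathcomp Require Import all_boot all_order all_algebra.
Set Implicit Arguments. Unset Strict Implicit. Unset Printing Implicit Defensive.
Import Order.TTheory GRing.Theory Num.Theory.
Local Open Scope ring_scope.

Section Defs.
Variables (R : realFieldType) (n : nat).

Definition nonneg_prices (p : 'I_n -> R) : Prop := forall j, 0 <= p j.

Definition price_of (p : 'I_n -> R) (S : {set 'I_n}) : R := \sum_(j in S) p j.

Definition demand (v : {set 'I_n} -> R) (p : 'I_n -> R) : {set {set 'I_n}} :=
  [set S : {set 'I_n} | [forall T : {set 'I_n},
      v T - price_of p T <= v S - price_of p S]].

Definition upd (p : 'I_n -> R) (i : 'I_n) (x : R) : 'I_n -> R :=
  fun j => if j == i then x else p j.

Definition monotone_val (v : {set 'I_n} -> R) : Prop :=
  forall S T : {set 'I_n}, S \subset T -> v S <= v T.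

Definition decision_map (v : {set 'I_n} -> R) (X : ('I_n -> R) -> {set 'I_n}) : Prop :=
  forall p, nonneg_prices p -> X p \in demand v p.

Definition maximal_map (v : {set 'I_n} -> R) (X : ('I_n -> R) -> {set 'I_n}) : Prop :=
  forall p, nonneg_prices p ->
    ~ exists S' : {set 'I_n}, (S' \in demand v p) /\ (X p \proper S').

Definition up_consistent (X : ('I_n -> R) -> {set 'I_n}) : Prop :=
  forall p, nonneg_prices p -> forall (i : 'I_n) (x : R), p i < x ->
    X (upd p i x) = X p \/ i \notin X (upd p i x).

End Defs.

Fixpoint lex_leq (s t : seq nat) : bool :=
  match s, t with
  | [::], _ => true
  | _ :: _, [::] => false
  | x :: s', y :: t' => (x < y)%N || ((x == y) && lex_leq s' t')
  end.

(* A subset of 'I_n is identified with the increasing word of its elements;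
   subsets are ordered lexicographically on these words. *)
Definition set_word n (S : {set 'I_n}) : seq nat := [seq val i | i <- enum S].
Definition lex_set_le n (S T : {set 'I_n}) : bool := lex_leq (set_word S) (set_word T).

(* The lexicographically first element of a family of sets (set0 if empty). *)
Definition lex_first n (F : {set {set 'I_n}}) : {set 'I_n} :=
  odflt set0 [pick S in F | [forall T in F, lex_set_le S T]].

Definition maximal_members n (F : {set {set 'I_n}}) : {set {set 'I_n}} :=
  [set S in F | maxset (fun T => T \in F) S].

Definition lex_decision (R : realFieldType) n (v : {set 'I_n} -> R)
  : ('I_n -> R) -> {set 'I_n} := fun p => lex_first (demand v p).

Definition lex_max_decision (R : realFieldType) n (v : {set 'I_n} -> R)
  : ('I_n -> R) -> {set 'I_n} := fun p => lex_first (maximal_members (demand v p)).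

(** Raising the price of good [i] lowers the utility of every bundle containing
    [i] by the same amount and leaves the others unchanged.  Hence if some
    bundle containing [i] is still demanded after the raise, the old demand
    set is exactly the set of new demanded bundles containing [i]: it shrinks
    to a subfamily, closed upwards inside the new one, which contains the
    chosen bundle.  The lexicographically first element of a family that lies
    in a subfamily is also the first element of that subfamily, and the
    inclusion-maximal members of an upward closed subfamily are the maximal
    members of the family that lie in it; so both decision maps choose the
    same bundle before and after the raise. *)

From mathcomp Require Import all_boot all_order all_algebra lra.
Import Order.TTheory GRing.Theory Num.Theory.
Local Open Scope ring_scope.

Lemma lex_leqE (s t : seq nat) : lex_leq s t = (s <= t :> seqlexi nat)%O.
Proof.
elim: s t => [|x s IH] [|y t] //=.
by rewrite lexi_cons -IH /Order.le /=; case: ltngtP.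
Qed.

Lemma set_word_inj n : injective (@set_word n).
Proof.
move=> S T eqST; apply/setP => j.
have : (val j \in set_word S) = (val j \in set_word T) by rewrite eqST.
by rewrite !(mem_map val_inj) !mem_enum.
Qed.

Lemma lex_set_le_anti n (S T : {set 'I_n}) :
  lex_set_le S T -> lex_set_le T S -> S = T.
Proof.
rewrite /lex_set_le !lex_leqE => ST TS.
by apply: set_word_inj; apply: (@le_anti _ (seqlexi nat)); rewrite ST TS.
Qed.

Lemma lex_firstP {n} {F : {set {set 'I_n}}} : F != set0 ->
  lex_first F \in F /\ {in F, forall T, lex_set_le (lex_first F) T}.
Proof.
case/set0Pn => S0 S0F; rewrite /lex_first.
case: pickP => [S /andP[SF /forall_inP minS] | noMin]; first by [].
case: (arg_minP (fun S : {set 'I_n} => set_word S : seqlexi nat) S0F).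
move=> S SF minS; move: (noMin S) => /negbT /nandP[] /negP[]; first exact: SF.
by apply/forall_inP => T TF; rewrite /lex_set_le lex_leqE minS.
Qed.

Lemma lex_first_sub n (F G : {set {set 'I_n}}) :
  G \subset F -> lex_first F \in G -> lex_first F = lex_first G.
Proof.
move=> GF FG; have G0 : G != set0 by apply/set0Pn; exists (lex_first F).
have F0 : F != set0 by apply/set0Pn; exists (lex_first F); apply: (subsetP GF).
have [GG minG] := lex_firstP G0; have [_ minF] := lex_firstP F0.
by apply: lex_set_le_anti; [exact/minF/(subsetP GF) | exact: minG].
Qed.

Lemma maximal_membersP n (F : {set {set 'I_n}}) S :
  reflect (S \in F /\ {in F, forall T : {set 'I_n}, S \subset T -> T = S})
          (S \in maximal_members F).
Proof.
rewrite inE; apply: (iffP andP) => [[SF /maxsetP[_ maxS]] | [SF maxS]].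
  by split=> // T; apply: maxS.
by split=> //; apply/maxsetP; split=> // T; apply: maxS.
Qed.

Lemma maximal_members_neq0 {n} {F : {set {set 'I_n}}} :
  F != set0 -> maximal_members F != set0.
Proof.
case/set0Pn => S SF; have [A maxA _] := maxset_exists (P := mem F) SF.
by apply/set0Pn; exists A; rewrite inE maxA andbT; exact: maxsetp maxA.
Qed.

Lemma maximal_members_upclosed {n} (F G : {set {set 'I_n}}) :
  G \subset F -> {in G & F, forall T U : {set 'I_n}, T \subset U -> U \in G} ->
  maximal_members G = maximal_members F :&: G.
Proof.
move=> GF upG; apply/setP => S; rewrite in_setI.
apply/maximal_membersP/andP => [[SG maxS] | [/maximal_membersP[_ maxS] SG]].
  split=> //; apply/maximal_membersP; split; first exact: (subsetP GF).
  by move=> T TF ST; apply: maxS => //; apply: upG ST.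
by split=> // T TG; apply: maxS; apply: (subsetP GF).
Qed.

Section Demand.
Variables (R : realFieldType) (n : nat) (v : {set 'I_n} -> R).

Lemma price_of_upd (p : 'I_n -> R) i x T :
  price_of (upd p i x) T = price_of p T + (if i \in T then x - p i else 0).
Proof.
rewrite /price_of /upd; case: ifP => iT.
  rewrite (bigD1 i iT) [in RHS](bigD1 i iT) /= eqxx.
  rewrite (eq_bigr p) => [|j /andP[_ /negbTE -> //]]; lra.
rewrite addr0; apply: eq_bigr => j jT.
by case: eqP => // ji; rewrite -ji jT in iT.
Qed.

Lemma demandP p S :
  reflect (forall T, v T - price_of p T <= v S - price_of p S) (S \in demand v p).
Proof. by rewrite inE; apply: (iffP forallP). Qed.

Lemma demand_neq0 p : demand v p != set0.
Proof.
pose S := [arg max_(S > set0) (v S - price_of p S)]%O.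
apply/set0Pn; exists S; apply/demandP => T; rewrite /S.
by case: arg_maxP => // A _; apply.
Qed.

Lemma demand_raise p i x S : p i < x ->
  S \in demand v (upd p i x) -> i \in S ->
  demand v p = demand v (upd p i x) :&: [set T : {set 'I_n} | i \in T].
Proof.
move=> raise /demandP demS iS; apply/setP => T; rewrite in_setI [X in _ && X]inE.
apply/demandP/andP => [demT | [/demandP demT iT] U].
  have iT : i \in T.
    apply/negPn/negP => /negbTE iT.
    by move: (demS T) (demT S); rewrite !price_of_upd iS iT; lra.
  split=> //; apply/demandP => U.
  by move: (demS U) (demT S); rewrite !price_of_upd iS iT; case: (i \in U); lra.
by move: (demT U); rewrite !price_of_upd iT; case: (i \in U); lra.
Qed.

End Demand.

Arguments demand_neq0 {R n} v p.
Arguments demand_raise {R n v p i x S}.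

Theorem mainTheorem10 (R : realFieldType) (n : nat) (v : {set 'I_n} -> R)
  (hmono : monotone_val v) (hv0 : v set0 = 0) (hpos : forall S, 0 <= v S) :
  (decision_map v (lex_decision v) /\ up_consistent (lex_decision v)) /\
  (decision_map v (lex_max_decision v) /\ maximal_map v (lex_max_decision v)
   /\ up_consistent (lex_max_decision v)).
Proof.
have lexD p : lex_decision v p \in demand v p by case: (lex_firstP (demand_neq0 v p)).
have maxD p : lex_max_decision v p \in maximal_members (demand v p).
  by case: (lex_firstP (maximal_members_neq0 (demand_neq0 v p))).
have raiseD p i x : p i < x -> i \in lex_max_decision v (upd p i x) ->
    demand v p = demand v (upd p i x) :&: [set T : {set 'I_n} | i \in T].
  move=> raise iS; case/maximal_membersP: (maxD (upd p i x)) => demS _.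
  exact: demand_raise raise demS iS.
split; [split | split; [|split]] => [p _ | p _ i x raise | p _ | p _ | p _ i x raise].
- exact: lexD.
- case iS: (i \in lex_decision v (upd p i x)); [left | by right].
  rewrite /lex_decision (demand_raise raise (lexD _) iS).
  by apply: lex_first_sub; [exact: subsetIl | rewrite in_setI lexD inE].
- by case/maximal_membersP: (maxD p).
- case=> S [demS /andP[sub /negP]]; case/maximal_membersP: (maxD p) => _ maxS.
  by rewrite (maxS S demS sub).
- case iS: (i \in lex_max_decision v (upd p i x)); [left | by right].
  rewrite /lex_max_decision (raiseD p i x raise iS).
  rewrite (maximal_members_upclosed (demand v (upd p i x)) (_ :&: _)).
  + apply: lex_first_sub; first exact: subsetIl.
    have /maximal_membersP[demS _] := maxD (upd p i x).
    by rewrite !in_setI maxD demS inE.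
  + exact: subsetIl.
  + move=> T U /setIP[_]; rewrite inE => iT demU /subsetP TU.
    by rewrite in_setI demU inE TU.
Qed.
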